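(* Let $L$ be a subfit frame. Then $\overline{\mathrm{LSC}}(L)$ is meet-dense in $\overline{\mathrm{C}}(\mathrm{coS}(L))$ and $\overline{\mathrm{USC}}(L)$ is join-dense in $\overline{\mathrm{C}}(\mathrm{coS}(L))$.
   Context: A frame $L$ is subfit if for all $a,b\in L$ with $a\not\le b$ there is $c$ with $a\vee c=1\ne b\vee c$. A sublocale of $L$ is a subset closed under arbitrary meets and such that $x\to s\in S$ for $x\in L$, $s\in S$; $\mathrm{coS}(L)$ is the frame of all sublocales ordered by reverse inclusion. For $a\in L$, $\mathfrak{c}(a)=\{x\mid x\ge a\}$ is the closed sublocale. $\mathbb{Q}$ is the rationals. The frame of extended reals $\mathfrak{L}(\overline{\mathbb{R}})$ is presented by generators $(r,\textsf{---})$, $(\textsf{---},s)$ ($r,s\in\mathbb{Q}$) subject to (r1) $(r,\textsf{---})\wedge(\textsf{---},s)=0$ whenever $r\ge s$; (r2) $(r,\textsf{---})\vee(\textsf{---},s)=1$ whenever $r<s$; (r3) $(r,\textsf{---})=\bigvee_{s>r}(s,\textsf{---})$; (r4) $(\textsf{---},s)=\bigvee_{r<s}(\textsf{---},r)$. For a frame $M$, $\overline{\mathrm{C}}(M)$ is the set of frame homomorphisms $\mathfrak{L}(\overline{\mathbb{R}})\to M$ ordered by $f\le g$ iff $f(r,\textsf{---})\le g(r,\textsf{---})$ for all $r$. $\overline{\mathrm{LSC}}(L)$ (extended lower semicontinuous functions) is the set of $g\in\overline{\mathrm{C}}(\mathrm{coS}(L))$ with $g(r,\textsf{---})$ a closed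 sublocale for all $r\in\mathbb{Q}$; $\overline{\mathrm{USC}}(L)$ is the set of $g\in\overline{\mathrm{C}}(\mathrm{coS}(L))$ with $g(\textsf{---},s)$ closed for all $s$. A subset $A$ of a poset $P$ is meet-dense (join-dense) if every element of $P$ is a meet (join) in $P$ of elements of $A$. *)

From mathcomp Require Import all_boot all_order all_algebra.
Set Implicit Arguments. Unset Strict Implicit. Unset Printing Implicit Defensive.
Import Order.TTheory GRing.Theory Num.Theory.

Record frame := Frame {
  fcar :> Type;
  fle : fcar -> fcar -> Prop;
  fsup : (fcar -> Prop) -> fcar;
  fmeet : fcar -> fcar -> fcar;
  fle_refl : forall x, fle x x;
  fle_trans : forall x y z, fle x y -> fle y z -> fle x z;
  fle_antisym : forall x y, fle x y -> fle y x -> x = y;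
  fsup_ub : forall (S : fcar -> Prop) x, S x -> fle x (fsup S);
  fsup_least : forall (S : fcar -> Prop) y,
      (forall x, S x -> fle x y) -> fle (fsup S) y;
  fmeet_glb : forall a b c, fle c (fmeet a b) <-> (fle c a /\ fle c b);
  fdistr : forall a (S : fcar -> Prop),
      fmeet a (fsup S) = fsup (fun y => exists x, S x /\ y = fmeet a x)
}.

Section FrameOps.
Variable L : frame.
Definition ftop : L := fsup (fun _ : L => True).
Definition fbot : L := fsup (fun _ : L => False).
Definition fjoin (a b : L) : L := fsup (fun x => x = a \/ x = b).
Definition finf (A : L -> Prop) : L :=
  fsup (fun x => forall a, A a -> fle x a).
Definition fimp (x s : L) : L := fsup (fun y => fle (fmeet y x) s).
End FrameOps.

Definition subfit (L : frame) : Prop :=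
  forall a b : L, ~ fle a b ->
    exists c : L, fjoin a c = ftop L /\ fjoin b c <> ftop L.

Definition sublocale (L : frame) (S : L -> Prop) : Prop :=
  (forall A : L -> Prop, (forall x, A x -> S x) -> S (finf A)) /\
  (forall (x s : L), S s -> S (fimp x s)).

Definition closed_sub (L : frame) (a : L) : L -> Prop := fun x => fle a x.

Definition is_closed_sub (L : frame) (S : L -> Prop) : Prop :=
  exists a : L, forall x, S x <-> closed_sub a x.

(* The lattice operations of the frame coS(L) of sublocales, ordered  *)
(* by REVERSE inclusion.  Elements are represented by predicates on L *)
(* (required to be sublocales where relevant).                        *)
Section CoS.
Variable L : frame.
Definition coS_le (S T : L -> Prop) : Prop := forall x, T x -> S x.
Definition coS_eq (S T : L -> Prop) : Prop := coS_le S T /\ coS_le T S.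
Definition coS_sup (F : (L -> Prop) -> Prop) : L -> Prop :=
  fun x => forall S, F S -> S x.
Definition coS_join (S T : L -> Prop) : L -> Prop := fun x => S x /\ T x.
(* meet in coS(L) = sublocale generated by the union *)
Definition coS_meet (S T : L -> Prop) : L -> Prop :=
  fun x => exists A : L -> Prop, (forall y, A y -> S y \/ T y) /\ x = finf A.
Definition coS_top : L -> Prop := fun x => x = ftop L.
Definition coS_bot : L -> Prop := fun _ => True.
End CoS.

(* C(coS(L)) with extended reals.  By the universal property of the   *)
(* presentation of L(R-bar), a frame homomorphism L(R-bar) -> coS(L)  *)
(* is the same as an assignment of elements of coS(L) to the          *)
(* generators (r,--) (field [up]) and (--,s) (field [dn]) satisfying  *)
(* the relations (r1)-(r4) in coS(L).                                 *)
Record xhom (L : frame) := XHom {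
  up : rat -> (L -> Prop);
  dn : rat -> (L -> Prop)
}.

Local Open Scope ring_scope.

Definition in_Cbar_coS (L : frame) (f : xhom L) : Prop :=
  (forall r, sublocale (up f r)) /\ (forall s, sublocale (dn f s)) /\
  (forall r s : rat, s <= r ->
      coS_eq (coS_meet (up f r) (dn f s)) (@coS_bot L)) /\
  (forall r s : rat, r < s ->
      coS_eq (coS_join (up f r) (dn f s)) (@coS_top L)) /\
  (forall r : rat,
      coS_eq (up f r)
        (coS_sup (fun S => exists s : rat, r < s /\ S = up f s))) /\
  (forall s : rat,
      coS_eq (dn f s)
        (coS_sup (fun S => exists r : rat, r < s /\ S = dn f r))).

Definition xle (L : frame) (f g : xhom L) : Prop :=
  forall r : rat, coS_le (up f r) (up g r).

Definition in_LSC (L : frame) (g : xhom L) : Prop :=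
  in_Cbar_coS g /\ forall r : rat, is_closed_sub (up g r).

Definition in_USC (L : frame) (g : xhom L) : Prop :=
  in_Cbar_coS g /\ forall s : rat, is_closed_sub (dn g s).

Definition is_meet_in_Cbar (L : frame) (A : xhom L -> Prop) (f : xhom L) :=
  in_Cbar_coS f /\ (forall g, A g -> xle f g) /\
  (forall h, in_Cbar_coS h -> (forall g, A g -> xle h g) -> xle h f).

Definition is_join_in_Cbar (L : frame) (A : xhom L -> Prop) (f : xhom L) :=
  in_Cbar_coS f /\ (forall g, A g -> xle g f) /\
  (forall h, in_Cbar_coS h -> (forall g, A g -> xle g h) -> xle f h).

Definition meet_dense_in_Cbar (L : frame) (P : xhom L -> Prop) : Prop :=
  forall f, in_Cbar_coS f ->
    exists A : xhom L -> Prop, (forall g, A g -> P g) /\ is_meet_in_Cbar A f.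

Definition join_dense_in_Cbar (L : frame) (P : xhom L -> Prop) : Prop :=
  forall f, in_Cbar_coS f ->
    exists A : xhom L -> Prop, (forall g, A g -> P g) /\ is_join_in_Cbar A f.

From mathcomp Require Import all_boot all_order all_algebra.
From Stdlib Require Import Classical.
From mathcomp Require Import lra.
Import Order.TTheory GRing.Theory Num.Theory.
Set Implicit Arguments. Unset Strict Implicit. Unset Printing Implicit Defensive.

(* Fix f in C(coS L) and r < s.  The sublocales f(r,-) and f(-,s) meet only in
   {1}, while f(s,-) and f(-,s) generate all of L.  Subfitness shows that every
   x in f(r,-) is the meet of elements y >= x whose closed sublocale c(y) meets
   f(-,s) only in {1}; such a c(y) lies in f(s,-).  So the lower semicontinuous
   function equal to +oo on y and to s elsewhere lies above f, and any lower
   bound h of all these functions has y in h(s,-), hence x in h(r,-).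
   Join-density is the mirror image under the order-reversing involution
   f |-> -f, which exchanges lower and upper semicontinuous functions. *)

Section FrameFacts.
Variable L : frame.
Implicit Types (a b c d u w x y : L) (A : L -> Prop).

Lemma fle_top x : fle x (ftop L).
Proof. exact: fsup_ub. Qed.

Lemma ftop_le x : fle (ftop L) x -> x = ftop L.
Proof. by move=> h; apply: fle_antisym => //; apply: fle_top. Qed.

Lemma finf_lb A a : A a -> fle (finf A) a.
Proof. by move=> Aa; apply: fsup_least => x; apply. Qed.

Lemma finf_glb A v : (forall a, A a -> fle v a) -> fle v (finf A).
Proof. exact: fsup_ub. Qed.

Lemma fmeet_l a b : fle (fmeet a b) a.
Proof. by have [] := proj1 (fmeet_glb a b _) (fle_refl (fmeet a b)). Qed.

Lemma fmeet_r a b : fle (fmeet a b) b.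
Proof. by have [] := proj1 (fmeet_glb a b _) (fle_refl (fmeet a b)). Qed.

Lemma fle_meet a b c : fle c a -> fle c b -> fle c (fmeet a b).
Proof. by move=> ca cb; apply/fmeet_glb. Qed.

Lemma fjoin_l a b : fle a (fjoin a b).
Proof. by apply: fsup_ub; left. Qed.

Lemma fjoin_r a b : fle b (fjoin a b).
Proof. by apply: fsup_ub; right. Qed.

Lemma fjoin_lub a b c : fle a c -> fle b c -> fle (fjoin a b) c.
Proof. by move=> ac bc; apply: fsup_least => x [->|->]. Qed.

Lemma fimpP w u s : fle w (fimp u s) <-> fle (fmeet w u) s.
Proof.
split=> [wus|h]; last exact: fsup_ub.
apply: (@fle_trans _ _ (fmeet u (fimp u s))).
  by apply: fle_meet; [apply: fmeet_r | apply: fle_trans wus; apply: fmeet_l].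
rewrite fdistr; apply: fsup_least => _ [v [vus ->]].
by apply: fle_trans vus; apply: fle_meet; [apply: fmeet_r | apply: fmeet_l].
Qed.

Lemma fimp_meet d u : fimp d (fmeet u d) = fimp d u.
Proof.
apply: fle_antisym; apply/fimpP.
- by apply: fle_trans (fmeet_l u d); apply/fimpP/fle_refl.
- by apply: fle_meet; [apply/fimpP/fle_refl | apply: fmeet_r].
Qed.

End FrameFacts.

Section Sublocales.
Variable L : frame.
Implicit Types (a d u x y : L) (S T F U : L -> Prop).

(* o(a), described as the set of fixed points of a -> _. *)
Definition open_sub a : L -> Prop := fun x => forall w, fle (fmeet w a) x -> fle w x.

Definition sub_disjoint S T := forall x, S x -> T x -> x = ftop L.

Definition sub_cover S T := forall x, coS_meet S T x.

Lemma sublocale_top S : sublocale S -> S (ftop L).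
Proof.
case=> meetS _; have -> : ftop L = finf (fun _ => False) by apply/esym/ftop_le; apply: finf_glb.
by apply: meetS.
Qed.

Lemma sublocale_coS_top : sublocale (@coS_top L).
Proof.
split=> [A topA | x s ->]; apply: ftop_le.
- by apply: finf_glb => a /topA ->; apply: fle_refl.
- by apply/fimpP; apply: fle_top.
Qed.

Lemma sublocale_coS_bot : sublocale (@coS_bot L).
Proof. by []. Qed.

Lemma sublocale_closed a : sublocale (closed_sub a).
Proof.
split=> [A aA | x s as_]; first exact: finf_glb.
by apply/fimpP; apply: fle_trans as_; apply: fmeet_l.
Qed.

Lemma sublocale_open a : sublocale (open_sub a).
Proof.
split=> [A oA w wa | u s os w wa].
  by apply: finf_glb => b Ab; apply: (oA b Ab); apply: fle_trans wa (finf_lb Ab).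
apply/fimpP/os; apply: fle_trans (proj1 (fimpP _ _ _) wa).
by repeat apply: fle_meet; [apply: fle_trans (fmeet_l _ _) (fmeet_l _ _) | apply: fmeet_r
  | apply: fle_trans (fmeet_l _ _) (fmeet_r _ _)].
Qed.

Lemma closed_open_disjoint a : sub_disjoint (closed_sub a) (open_sub a).
Proof. by move=> x ax oax; apply/ftop_le/oax; apply: fle_trans (fmeet_r _ _) ax. Qed.

(* x is the meet of a \/ x and a -> x. *)
Lemma closed_open_cover a : sub_cover (closed_sub a) (open_sub a).
Proof.
move=> x; exists (fun y => y = fjoin a x \/ y = fimp a x); split.
  move=> _ [->|->]; [left; apply: fjoin_l | right => w].
  by rewrite !fimpP; apply: fle_trans; apply: fle_meet; [apply: fle_refl | apply: fmeet_r].
apply: fle_antisym.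
  by apply: finf_glb => _ [->|->]; [apply: fjoin_r | apply/fimpP; apply: fmeet_l].
set m := finf _; have m_imp : fle m (fimp a x) by apply: finf_lb; right.
apply: (@fle_trans _ _ (fmeet m (fjoin a x))).
  by apply: fle_meet; [apply: fle_refl | apply: finf_lb; left].
rewrite fdistr; apply: fsup_least => _ [v [[->|->] ->]]; last exact: fmeet_r.
exact: (proj1 (fimpP _ _ _) m_imp).
Qed.

Lemma sub_coverC S T : sub_cover S T -> sub_cover T S.
Proof. by move=> cST x; have [A [AST ->]] := cST x; exists A; split=> // y /AST []; auto. Qed.

Lemma sub_cover_bot S : sub_cover S (@coS_bot L).
Proof.
move=> x; exists (fun y => y = x); split; first by right.
by apply: fle_antisym; [apply: finf_glb => _ ->; apply: fle_refl | apply: finf_lb].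
Qed.

Lemma coS_meet_decomp S T x : sublocale S -> sublocale T -> coS_meet S T x ->
  exists s t, [/\ S s, T t & x = fmeet s t].
Proof.
move=> [meetS _] [meetT _] [A [AST ->]].
exists (finf (fun a => A a /\ S a)), (finf (fun a => A a /\ T a)).
split; [by apply: meetS => ? [] | by apply: meetT => ? [] |].
apply: fle_antisym.
  by apply: fle_meet; apply: finf_glb => a [Aa _]; apply: finf_lb.
apply: finf_glb => a Aa; case: (AST a Aa) => [Sa | Ta].
- exact: fle_trans (fmeet_l _ _) (finf_lb (conj Aa Sa)).
- exact: fle_trans (fmeet_r _ _) (finf_lb (conj Aa Ta)).
Qed.

(* d -> x = d -> u lies in both F and U, hence is 1, i.e. d <= x. *)
Lemma sub_disjoint_meet_cancel F U x u d :
  sublocale F -> sublocale U -> sub_disjoint F U ->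
  F x -> U u -> x = fmeet u d -> x = d.
Proof.
move=> sF sU dFU Fx Uu xud.
have imp_top : fimp d x = ftop L.
  apply: dFU; first exact: sF.2.
  by rewrite xud fimp_meet; apply: sU.2.
apply: fle_antisym; first by rewrite xud; apply: fmeet_r.
have /fimpP : fle d (fimp d x) by rewrite imp_top; apply: fle_top.
by apply: fle_trans; apply: fle_meet; apply: fle_refl.
Qed.

Lemma closed_sub_of_cover S E y : sublocale S -> sublocale E ->
  sub_cover S E -> sub_disjoint (closed_sub y) E -> forall w, closed_sub y w -> S w.
Proof.
move=> sS sE cSE dyE w yw; have [s [e [Ss Ee wse]]] := coS_meet_decomp sS sE (cSE w).
have e1 : e = ftop L by apply: dyE Ee; apply: fle_trans yw _; rewrite wse; apply: fmeet_r.
suff -> : w = s by [].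
rewrite wse e1; apply: fle_antisym; first exact: fmeet_l.
by apply: fle_meet; [apply: fle_refl | apply: fle_top].
Qed.

End Sublocales.

Section Subfit.
Variables (L : frame) (HL : subfit L).

(* Otherwise subfitness gives c with x \/ c <> 1, yet x \/ c lies in the second family. *)
Lemma subfit_meet_le (E : L -> Prop) (x : L) :
  fle (fmeet (finf (fun e => E e /\ fle x e))
             (finf (fun y => fle x y /\ sub_disjoint (closed_sub y) E))) x.
Proof.
apply: NNPP => nle; have [c [top_c xc_ntop]] := HL nle.
apply: xc_ntop; apply: ftop_le.
rewrite -top_c; apply: fjoin_lub; last exact: fjoin_r.
apply: fle_trans (fmeet_r _ _) _; apply: finf_lb; split; first exact: fjoin_l.
move=> e xce Ee; apply: ftop_le; rewrite -top_c; apply: fjoin_lub.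
- apply: fle_trans (fmeet_l _ _) _; apply: finf_lb; split=> //.
  exact: fle_trans (fjoin_l _ _) xce.
- exact: fle_trans (fjoin_r _ _) xce.
Qed.

Lemma subfit_meet_closed (T E : L -> Prop) (x : L) :
  sublocale T -> sublocale E -> sub_disjoint T E -> T x ->
  x = finf (fun y => fle x y /\ sub_disjoint (closed_sub y) E).
Proof.
move=> sT sE dTE Tx.
apply: (sub_disjoint_meet_cancel (u := finf (fun e => E e /\ fle x e)) sT sE dTE Tx).
  by apply: sE.1 => ? [].
apply: fle_antisym; last exact: subfit_meet_le.
by apply: fle_meet; apply: finf_glb => ? [].
Qed.

End Subfit.

Local Open Scope ring_scope.

Section ExtendedContinuous.
Variable L : frame.
Implicit Types (f g h : xhom L) (r s t : rat).

Lemma coS_eq_supP (S : L -> Prop) (D : rat -> L -> Prop) (P : rat -> Prop) :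
  coS_eq S (coS_sup (fun T => exists s, P s /\ T = D s)) <->
  (forall x, S x <-> forall s, P s -> D s x).
Proof.
split=> [[supS Ssup] x | SE]; first split.
- by move=> Sx s Ps; apply: (Ssup x Sx); exists s.
- by move=> Dx; apply: supS => _ [s [Ps ->]]; apply: Dx.
- split=> x.
  + by move=> supx; apply/SE => s Ps; apply: supx; exists s.
  + by move/SE => Dx _ [s [Ps ->]]; apply: Dx.
Qed.

Lemma in_Cbar_coSI f :
  (forall r, sublocale (up f r)) -> (forall s, sublocale (dn f s)) ->
  (forall r s, s <= r -> sub_cover (up f r) (dn f s)) ->
  (forall r s, r < s -> sub_disjoint (up f r) (dn f s)) ->
  (forall r x, up f r x <-> forall s, r < s -> up f s x) ->
  (forall s x, dn f s x <-> forall r, r < s -> dn f r x) ->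
  in_Cbar_coS f.
Proof.
move=> upS dnS cov dis upE dnE; do 2 split=> //; split.
  by move=> r s sr; split=> // x _; apply: cov.
split.
  move=> r s rs; split=> [x -> | x [upx dnx]]; last exact: dis upx dnx.
  by split; apply: sublocale_top.
by split=> [r | s]; apply/coS_eq_supP; [apply: upE | apply: dnE].
Qed.

Section CbarElim.
Variables (f : xhom L) (Hf : in_Cbar_coS f).

Lemma up_sublocale r : sublocale (up f r).
Proof. by case: Hf. Qed.

Lemma dn_sublocale s : sublocale (dn f s).
Proof. by case: Hf => _ []. Qed.

Lemma up_dn_cover r s : s <= r -> sub_cover (up f r) (dn f s).
Proof. by case: Hf => _ [_ [r1 _]] sr x; apply: (r1 r s sr).1. Qed.

Lemma up_dn_disjoint r s : r < s -> sub_disjoint (up f r) (dn f s).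
Proof. by case: Hf => _ [_ [_ [r2 _]]] rs x upx dnx; apply: (r2 r s rs).2. Qed.

Lemma upE r x : up f r x <-> forall s, r < s -> up f s x.
Proof. by case: Hf => _ [_ [_ [_ [r3 _]]]]; apply: (proj1 (coS_eq_supP _ _ _) (r3 r)). Qed.

Lemma dnE s x : dn f s x <-> forall r, r < s -> dn f r x.
Proof. by case: Hf => _ [_ [_ [_ [_ r4]]]]; apply: (proj1 (coS_eq_supP _ _ _) (r4 s)). Qed.

Lemma up_le r s x : r <= s -> up f r x -> up f s x.
Proof. by rewrite le_eqVlt => /predU1P [-> // | rs] /upE; apply. Qed.

End CbarElim.

Lemma xle_dn f g : in_Cbar_coS f -> in_Cbar_coS g -> xle f g ->
  forall s x, dn f s x -> dn g s x.
Proof.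
move=> Hf Hg fg s x dfx; apply/(dnE Hg) => r rs.
have [u [d [ugu dgd xud]]] := coS_meet_decomp (up_sublocale Hg r) (dn_sublocale Hg r)
  (up_dn_cover Hg (lexx r) x).
suff -> : x = d by [].
apply: (sub_disjoint_meet_cancel (dn_sublocale Hf s) (up_sublocale Hg r) _ dfx ugu xud).
by move=> y dfy ugy; apply: (up_dn_disjoint Hf rs (fg r y ugy) dfy).
Qed.

Definition xneg f : xhom L := XHom (fun r => dn f (- r)) (fun s => up f (- s)).

Lemma xneg_Cbar f : in_Cbar_coS f -> in_Cbar_coS (xneg f).
Proof.
move=> Hf; apply: in_Cbar_coSI => /=.
- by move=> r; apply: dn_sublocale.
- by move=> s; apply: up_sublocale.
- by move=> r s sr; apply/sub_coverC/up_dn_cover; rewrite // lerN2.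
- by move=> r s rs x dx ux; apply: (up_dn_disjoint Hf _ ux dx); rewrite ltrN2.
- move=> r x; split=> [/(dnE Hf) dx s rs | dx]; first by apply: dx; rewrite ltrN2.
  by apply/(dnE Hf) => q qr; rewrite -[q]opprK; apply: dx; lra.
- move=> s x; split=> [/(upE Hf) ux r rs | ux]; first by apply: ux; rewrite ltrN2.
  by apply/(upE Hf) => q sq; rewrite -[q]opprK; apply: ux; lra.
Qed.

Lemma xneg_LSC f : in_LSC f -> in_USC (xneg f).
Proof. by case=> Hf up_closed; split; [apply: xneg_Cbar | move=> s; apply: up_closed]. Qed.

Lemma xle_xneg f g : in_Cbar_coS f -> in_Cbar_coS g -> xle f g -> xle (xneg g) (xneg f).
Proof. by move=> Hf Hg fg r; apply: xle_dn Hf Hg fg (- r). Qed.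

Lemma xnegK_xle_l f g : xle (xneg (xneg f)) g <-> xle f g.
Proof. by split=> fg r; move: (fg r); rewrite /= opprK. Qed.

Lemma xnegK_xle_r f g : xle f (xneg (xneg g)) <-> xle f g.
Proof. by split=> fg r; move: (fg r); rewrite /= opprK. Qed.

Lemma join_dense_USC :
  meet_dense_in_Cbar (@in_LSC L) -> join_dense_in_Cbar (@in_USC L).
Proof.
move=> meet_dense f Hf; have [A [A_LSC [_ [A_lb A_glb]]]] := meet_dense _ (xneg_Cbar Hf).
have Cbar_A g : A g -> in_Cbar_coS g by move/A_LSC => [].
exists (fun g => exists2 g', A g' & g = xneg g'); split.
  by move=> _ [g' /A_LSC LSC_g' ->]; apply: xneg_LSC.
split=> //; split.
  move=> _ [g' Ag' ->]; apply/xnegK_xle_r.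
  exact: xle_xneg (xneg_Cbar Hf) (Cbar_A _ Ag') (A_lb _ Ag').
move=> h Hh h_ub; apply/xnegK_xle_l/xnegK_xle_r.
apply: xle_xneg (xneg_Cbar Hh) (xneg_Cbar Hf) _; apply: A_glb (xneg_Cbar Hh) _ => g' Ag'.
apply/xnegK_xle_r; apply: xle_xneg (xneg_Cbar (Cbar_A _ Ag')) Hh _.
by apply: h_ub; exists g'.
Qed.

Lemma step_upE (A B : L -> Prop) t r x : (forall y, A y -> B y) ->
  (if r < t then A else B) x <-> forall s, r < s -> (if s < t then A else B) x.
Proof.
move=> AB; split=> [ax s rs | ax].
  case: ifPn => st; first by rewrite (lt_trans rs st) in ax.
  by move: ax; case: ifP => // _; apply: AB.
case: (ltP r t) => rt.
- by have := ax ((r + t) / 2) ltac:(lra); rewrite ifT //; lra.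
- by have := ax (r + 1) ltac:(lra); rewrite ifN // -leNgt; lra.
Qed.

Lemma step_dnE (A B : L -> Prop) t s x : (forall y, B y -> A y) ->
  (if s <= t then A else B) x <-> forall r, r < s -> (if r <= t then A else B) x.
Proof.
move=> BA; split=> [ax r rs | ax].
  case: (leP r t) => rt; last by move: ax; rewrite leNgt (lt_trans rt rs).
  by move: ax; case: ifP => // _; apply: BA.
case: (leP s t) => st.
- by have := ax (s - 1) ltac:(lra); rewrite ifT //; lra.
- by have := ax ((s + t) / 2) ltac:(lra); rewrite ifN // -ltNge; lra.
Qed.

Definition xstep (C O : L -> Prop) t : xhom L :=
  XHom (fun r => if r < t then @coS_top L else C) (fun s => if s <= t then @coS_bot L else O).

Lemma xstep_Cbar C O t : sublocale C -> sublocale O ->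
  sub_disjoint C O -> sub_cover C O -> in_Cbar_coS (xstep C O t).
Proof.
move=> sC sO dCO cCO; apply: in_Cbar_coSI => /=.
- by move=> r; case: ifP => _; [apply: sublocale_coS_top | apply: sC].
- by move=> s; case: ifP => _; [apply: sublocale_coS_bot | apply: sO].
- move=> r s sr; case: (leP s t) => st; first exact: sub_cover_bot.
  by rewrite ltNge (ltW (lt_le_trans st sr)).
- move=> r s rs; case: (ltP r t) => rt; first by move=> x ->.
  by rewrite leNgt (le_lt_trans rt rs).
- by move=> r x; apply: step_upE => y ->; apply: sublocale_top.
- by move=> s x; apply: step_dnE.
Qed.

(* +oo on the open a and t elsewhere: c(a) is the image of a in coS(L). *)
Definition lsc_step (a : L) t : xhom L := xstep (closed_sub a) (open_sub a) t.

Lemma lsc_step_LSC a t : in_LSC (lsc_step a t).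
Proof.
split; first by apply: xstep_Cbar; [apply: sublocale_closed | apply: sublocale_open
  | apply: closed_open_disjoint | apply: closed_open_cover].
move=> r /=; case: ifP => _; last by exists a.
by exists (ftop L) => x; split=> [-> | /ftop_le //]; apply: fle_refl.
Qed.

Lemma xle_lsc_step f a t : in_Cbar_coS f ->
  (forall w, closed_sub a w -> up f t w) -> xle f (lsc_step a t).
Proof.
move=> Hf a_up r x /=; case: (ltP r t) => rt.
- by move=> ->; apply: sublocale_top (up_sublocale Hf r).
- by move/a_up; apply: up_le.
Qed.

Lemma meet_dense_LSC : subfit L -> meet_dense_in_Cbar (@in_LSC L).
Proof.
move=> HL f Hf; exists (fun g => in_LSC g /\ xle f g); split; first by move=> g [].
split=> //; split; first by move=> g [].
move=> h Hh h_lb r x ufx; apply/(upE Hh) => s rs.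
rewrite (subfit_meet_closed HL (up_sublocale Hf r) (dn_sublocale Hf s)
  (up_dn_disjoint Hf rs) ufx).
apply: (up_sublocale Hh s).1 => y [_ y_dn].
have y_up := closed_sub_of_cover (up_sublocale Hf s) (dn_sublocale Hf s)
  (up_dn_cover Hf (lexx s)) y_dn.
apply: (h_lb (lsc_step y s)); first by split; [apply: lsc_step_LSC | apply: xle_lsc_step].
by rewrite /= ltxx; apply: fle_refl.
Qed.

End ExtendedContinuous.

Theorem proposition4p4 (L : frame) (HL : subfit L) :
  meet_dense_in_Cbar (@in_LSC L) /\ join_dense_in_Cbar (@in_USC L).
Proof.
have meet_dense := meet_dense_LSC HL.
by split; last apply: join_dense_USC.
Qed.
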